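(* Let $\alpha_2\in\mathbb{C}$ and let $u(t)$ satisfy the fifth-order equation $$\frac{d^5u}{dt^5}=\frac{N}{48\left(\frac{du}{dt}\right)^2+8\frac{d^3u}{dt^3}-2t},$$ where $$N=(1-\alpha_2)\alpha_2-2u'\left(24u'^2-t\right)^2-24u''\left(u'-tu''\right)+8u'''\left(5u'\left(t-24u'^2\right)-12u''^2-16u'u'''\right)+2u''''\left(48u'u''+2u''''-1\right)$$ (primes denote $d/dt$). Define $$x=u,\quad y=u',\quad z=u'',\quad w=u'''-\frac14\left(t-24u'^2\right),\quad q=\frac{u''''-\frac{\alpha_2-24u'u''}{2}}{u'''-\frac14\left(t-24u'^2\right)} .$$ Then this birational change of variables takes the equation (written as a first-order system in $u,u',u'',u''',u''''$) into the polynomial system $$\frac{dx}{dt}=y,\quad \frac{dy}{dt}=z,\quad \frac{dz}{dt}=-6y^2+w+\frac t4,\quad \frac{dw}{dt}=wq+\frac{2\alpha_2-1}{4},\quad \frac{dq}{dt}=-\frac12q^2-4y .$$ *)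

From HB Require Import structures.
From mathcomp Require Import all_boot all_order all_algebra.
From mathcomp Require Import all_classical all_reals all_analysis.
Set Implicit Arguments. Unset Strict Implicit. Unset Printing Implicit Defensive.
Import Order.TTheory GRing.Theory Num.Theory.
Import numFieldNormedType.Exports.
Local Open Scope ring_scope.

(* Numerator N of the fifth-order equation, as a polynomial in
   a = alpha_2, t, and u1 = u', u2 = u'', u3 = u''', u4 = u''''. *)
Definition N5 (K : numFieldType) (a t u1 u2 u3 u4 : K) : K :=
  (1 - a) * a
  - 2 * u1 * (24 * u1 ^+ 2 - t) ^+ 2
  - 24 * u2 * (u1 - t * u2)
  + 8 * u3 * (5 * u1 * (t - 24 * u1 ^+ 2) - 12 * u2 ^+ 2 - 16 * u1 * u3)
  + 2 * u4 * (48 * u1 * u2 + 2 * u4 - 1).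

Definition D5 (K : numFieldType) (t u1 u3 : K) : K :=
  48 * u1 ^+ 2 + 8 * u3 - 2 * t.

From HB Require Import structures.
From mathcomp Require Import all_boot all_order all_algebra.
From mathcomp Require Import all_classical all_reals all_analysis.
From mathcomp Require Import ring.
Import Order.TTheory GRing.Theory Num.Theory.
Import numFieldNormedType.Exports.
Local Open Scope classical_set_scope.
Local Open Scope ring_scope.

(* The new variables are polynomial in the jet (t, u', ..., u'''') except for
   q = p / w, where p := u'''' - (alpha_2 - 24 u' u'')/2.  Differentiating,
   w' = p + (2 alpha_2 - 1)/4, which is w q + (2 alpha_2 - 1)/4.  For q' one
   needs u^(5), and the point is that the denominator of the equation is
   8 w while its numerator is, as a polynomial identity in the jet,
   4 p^2 + 2 (2 alpha_2 - 1) p - 32 u' w^2 - 96 w (u''^2 + u' u''');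
   the quotient rule then gives q' = - q^2/2 - 4 u'. *)

Section JetIdentities.
Context {K : numFieldType}.

Definition jet_w (t u1 u3 : K) : K := u3 - 4^-1 * (t - 24 * u1 ^+ 2).

Definition jet_p (a u1 u2 u4 : K) : K := u4 - (a - 24 * u1 * u2) / 2.

Lemma jet_u3E t u1 u3 : u3 = - 6 * u1 ^+ 2 + jet_w t u1 u3 + t / 4.
Proof. by rewrite /jet_w; field. Qed.

Lemma D5_jet_w t u1 u3 : D5 t u1 u3 = 8 * jet_w t u1 u3.
Proof. by rewrite /D5 /jet_w; field. Qed.

Lemma N5_jet a t u1 u2 u3 u4 : N5 a t u1 u2 u3 u4 =
  4 * jet_p a u1 u2 u4 ^+ 2 + 2 * (2 * a - 1) * jet_p a u1 u2 u4
  - 32 * u1 * jet_w t u1 u3 ^+ 2 - 96 * jet_w t u1 u3 * (u2 ^+ 2 + u1 * u3).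
Proof. by rewrite /N5 /jet_p /jet_w; field. Qed.

Lemma jet_q_derivative {a t u1 u2 u3 u4} : jet_w t u1 u3 != 0 ->
  let w := jet_w t u1 u3 in let p := jet_p a u1 u2 u4 in
  ((N5 a t u1 u2 u3 u4 / D5 t u1 u3 + 12 * (u2 * u2 + u1 * u3)) * w
     - p * (p + (2 * a - 1) / 4)) / w ^+ 2
  = - 2^-1 * (p / w) ^+ 2 - 4 * u1.
Proof. by move=> w0 /=; rewrite D5_jet_w N5_jet; field. Qed.

End JetIdentities.

Section PointwiseDerivatives.
Context {K : numFieldType}.
Implicit Types (f g : K -> K) (x c df dg : K).

Lemma is_derive1B {f g x df dg} : is_derive x 1 f df -> is_derive x 1 g dg ->
  is_derive x 1 (fun s => f s - g s) (df - dg).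
Proof. exact: is_deriveB. Qed.

Lemma is_derive1M {f g x df dg} : is_derive x 1 f df -> is_derive x 1 g dg ->
  is_derive x 1 (fun s => f s * g s) (f x * dg + g x * df).
Proof. exact: is_deriveM. Qed.

Lemma is_derive1_cst c x : is_derive x 1 (fun=> c) 0.
Proof. exact: is_derive_cst. Qed.

Lemma is_derive1_id x : is_derive x 1 (fun s => s) 1.
Proof. exact: is_derive_id. Qed.

Lemma is_derive1Ml c {f x df} : is_derive x 1 f df ->
  is_derive x 1 (fun s => c * f s) (c * df).
Proof.
move=> Df; apply: is_derive_eq (is_derive1M (is_derive1_cst c x) Df) _.
by rewrite mulr0 addr0.
Qed.

Lemma is_derive1_sqr {f x df} : is_derive x 1 f df ->
  is_derive x 1 (fun s => f s ^+ 2) (2 * f x * df).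
Proof. by move=> Df; apply: is_derive_eq (is_deriveX 2 Df) _; rewrite expr1. Qed.

Lemma is_derive1_div {f g x df dg} :
  is_derive x 1 f df -> is_derive x 1 g dg -> g x != 0 ->
  is_derive x 1 (fun s => f s / g s) ((df * g x - f x * dg) / g x ^+ 2).
Proof.
move=> Df Dg gx0.
have Dginv : is_derive x 1 (fun s => (g s)^-1) (- (g x) ^- 2 * dg).
  by apply: DeriveDef; [exact: derivableV | rewrite deriveV // derive_val].
by apply: is_derive_eq (is_derive1M Df Dginv) _; field.
Qed.

Lemma is_derive_derive1 {f x df} r : is_derive x 1 f df -> df = r ->
  derivable f x 1 /\ derive1 f x = r.
Proof. by move=> Df <-; rewrite derive1E derive_val; split. Qed.

Lemma is_derive_derive1nS {f k x} : derivable (derive1n k f) x 1 ->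
  is_derive x 1 (derive1n k f) (derive1n k.+1 f x).
Proof. by move/derivableP; rewrite derive1nS derive1E. Qed.

End PointwiseDerivatives.

Section JetDerivatives.
Context {K : numFieldType}.
Context {f1 f2 f3 f4 : K -> K} {t d1 d2 d3 d4 : K}.
Hypotheses (Df1 : is_derive t 1 f1 d1) (Df2 : is_derive t 1 f2 d2).
Hypotheses (Df3 : is_derive t 1 f3 d3) (Df4 : is_derive t 1 f4 d4).

Lemma is_derive_jet_w a :
  is_derive t 1 (fun s => jet_w s (f1 s) (f3 s)) (jet_p a (f1 t) d1 d3 + (2 * a - 1) / 4).
Proof.
have Dw := is_derive1B Df3 (is_derive1Ml 4^-1
  (is_derive1B (is_derive1_id t) (is_derive1Ml 24 (is_derive1_sqr Df1)))).
by apply: is_derive_eq Dw _; rewrite /jet_p; field.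
Qed.

Lemma is_derive_jet_p a :
  is_derive t 1 (fun s => jet_p a (f1 s) (f2 s) (f4 s)) (d4 + 12 * (d1 * f2 t + f1 t * d2)).
Proof.
have Dp := is_derive1B Df4 (is_derive1M
  (is_derive1B (is_derive1_cst a t) (is_derive1M (is_derive1Ml 24 Df1) Df2))
  (is_derive1_cst 2^-1 t)).
by apply: is_derive_eq Dp _; field.
Qed.

End JetDerivatives.

Theorem theorem9p1 (K : numClosedFieldType) (a2 : K) (u : K -> K) (D : set K) :
  open D ->
  (forall t, D t -> forall k, (k < 5)%N -> derivable (derive1n k u) t 1) ->
  (forall t, D t -> D5 t (derive1 u t) (derive1n 3 u t) != 0) ->
  (forall t, D t -> derive1n 3 u t - 4^-1 * (t - 24 * (derive1 u t) ^+ 2) != 0) ->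
  (forall t, D t ->
     derive1n 5 u t = N5 a2 t (derive1 u t) (derive1n 2 u t) (derive1n 3 u t) (derive1n 4 u t)
                / D5 t (derive1 u t) (derive1n 3 u t)) ->
  let x := u in
  let y := derive1 u in
  let z := derive1n 2 u in
  let w := fun t => derive1n 3 u t - 4^-1 * (t - 24 * (derive1 u t) ^+ 2) in
  let q := fun t => (derive1n 4 u t - (a2 - 24 * derive1 u t * derive1n 2 u t) / 2) / w t in
  forall t, D t ->
    [/\ derivable x t 1 /\ derive1 x t = y t,
        derivable y t 1 /\ derive1 y t = z t,
        derivable z t 1 /\ derive1 z t = - 6 * (y t) ^+ 2 + w t + t / 4,
        derivable w t 1 /\ derive1 w t = w t * q t + (2 * a2 - 1) / 4
      & derivable q t 1 /\ derive1 q t = - 2^-1 * (q t) ^+ 2 - 4 * y t].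
Proof.
move=> _ u_derivable _ w_neq0 u5E x y z w q t Dt.
have Du k (k_lt5 : (k < 5)%N) := is_derive_derive1nS (u_derivable t Dt k k_lt5).
have Dw := is_derive_jet_w (Du 1%N isT) (Du 3%N isT) a2.
have Dp := is_derive_jet_p (Du 1%N isT) (Du 2%N isT) (Du 4%N isT) a2.
split.
- exact: is_derive_derive1 (Du 0%N isT) _.
- exact: is_derive_derive1 (Du 1%N isT) _.
- exact: is_derive_derive1 (Du 2%N isT) (jet_u3E _ _ _).
- apply: is_derive_derive1 Dw _.
  by rewrite /q [w t * _]mulrC divfK ?w_neq0.
- apply: is_derive_derive1 (is_derive1_div Dp Dw (w_neq0 t Dt)) _.
  by rewrite (u5E t Dt); exact: jet_q_derivative (w_neq0 t Dt).
Qed.
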